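(* Let $\Omega\subseteq\mathbb{R}^n$ be open and let $f\in\mathbb{A}(\Omega)$ be D-continuous. If there is a dense subset $D$ of $\Omega$ such that $w(f(x))=0$ for all $x\in D$, then $f$ is H-continuous.
   Context: $\overline{\mathbb{R}}=\mathbb{R}\cup\{\pm\infty\}$, $\mathbb{I}\overline{\mathbb{R}}$ is the set of closed intervals $[\underline a,\overline a]$ with $\underline a\le\overline a$ in $\overline{\mathbb{R}}$, $a\in\overline{\mathbb{R}}$ identified with $[a,a]$. The width $w(a)$ of $a=[\underline a,\overline a]$ is $\overline a-\underline a$ if both endpoints are finite, $\infty$ if $\underline a<\overline a$ and one endpoint is infinite, and $0$ if $\underline a=\overline a=\pm\infty$. $\mathbb{A}(\Omega)$ is the set of functions $\Omega\to\mathbb{I}\overline{\mathbb{R}}$. $B_\delta(x)=\{y\in\Omega:\|x-y\|<\delta\}$. For dense $D\subseteq\Omega$ and $f\in\mathbb{A}(D)$: $I(D,\Omega,f)(x)=\sup_{\delta>0}\inf\{z\in f(y):y\in B_\delta(x)\cap D\}$, $S(D,\Omega,f)(x)=\inf_{\delta>0}\sup\{z\in f(y):y\in B_\delta(x)\cap D\}$, $F(D,\Omega,f)(x)=[I(D,\Omega,f)(x),S(D,\Omega,f)(x)]$; $F(f)=F(\Omega,\Omega,f)$. $f$ is D-continuous if $F(D,\Omega,f)=f$ for every dense $D\subseteq\Omega$ (using the restriction of $f$ to $D$); H-continuous if for every $g\in\mathbb{A}(\Omega)$ with $g(x)\subseteq f(x)$ for all $x$ one has $F(g)=f$. *)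

From HB Require Import structures.
From mathcomp Require Import all_boot all_order all_algebra.
From mathcomp Require Import all_classical all_reals all_analysis.
Set Implicit Arguments. Unset Strict Implicit. Unset Printing Implicit Defensive.
Import Order.TTheory GRing.Theory Num.Theory.
Import numFieldNormedType.Exports.
Local Open Scope classical_set_scope.
Local Open Scope ring_scope.

Section IntervalAnalysis.
Variables (R : realType) (n : nat).

(* An element of I(\bar R) is a pair (lower, upper); validity lower <= upper
   is imposed pointwise on Omega by [in_A]. *)
Definition ivl := (\bar R * \bar R)%type.

Definition mem_ivl (z : \bar R) (a : ivl) : Prop := (a.1 <= z)%E /\ (z <= a.2)%E.

Definition width (a : ivl) : \bar R :=
  match a with
  | (EFin l, EFin h) => (h - l)%:E
  | (l, h) => if l == h then 0%E else +oo%E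
  end.

Definition in_A (Om : set 'rV[R]_n) (f : 'rV[R]_n -> ivl) : Prop :=
  forall x, Om x -> ((f x).1 <= (f x).2)%E.

Definition dense_in (D Om : set 'rV[R]_n) : Prop :=
  D `<=` Om /\
  forall x, Om x -> forall d : R, 0 < d -> exists y, D y /\ `|x - y| < d.

Definition Bd (Om : set 'rV[R]_n) (x : 'rV[R]_n) (d : R) : set 'rV[R]_n :=
  [set y | Om y /\ `|x - y| < d].

Definition vals (D Om : set 'rV[R]_n) (f : 'rV[R]_n -> ivl) x d : set (\bar R) :=
  [set z | exists y, (Bd Om x d `&` D) y /\ mem_ivl z (f y)].

Definition Iop (D Om : set 'rV[R]_n) (f : 'rV[R]_n -> ivl) x : \bar R :=
  ereal_sup [set ereal_inf (vals D Om f x d) | d in [set d : R | 0 < d]].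

Definition Sop (D Om : set 'rV[R]_n) (f : 'rV[R]_n -> ivl) x : \bar R :=
  ereal_inf [set ereal_sup (vals D Om f x d) | d in [set d : R | 0 < d]].

Definition Fop (D Om : set 'rV[R]_n) (f : 'rV[R]_n -> ivl) x : ivl :=
  (Iop D Om f x, Sop D Om f x).

Definition D_continuous (Om : set 'rV[R]_n) (f : 'rV[R]_n -> ivl) : Prop :=
  forall D, dense_in D Om -> forall x, Om x -> Fop D Om f x = f x.

Definition H_continuous (Om : set 'rV[R]_n) (f : 'rV[R]_n -> ivl) : Prop :=
  forall g, in_A Om g ->
    (forall x, Om x -> forall z, mem_ivl z (g x) -> mem_ivl z (f x)) ->
    forall x, Om x -> Fop Om Om g x = f x.

End IntervalAnalysis.

From HB Require Import structures.
From mathcomp Require Import all_boot all_order all_algebra.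
From mathcomp Require Import all_classical all_reals all_analysis.
Import Order.TTheory GRing.Theory Num.Theory.
Import numFieldNormedType.Exports.
Local Open Scope classical_set_scope.
Local Open Scope ring_scope.

(* D-continuity, applied to Omega itself and to the dense set D on which f is
   point-valued, gives F(D,Omega,f) = f = F(Omega,Omega,f).  A valid g with
   g(x) inside f(x) must equal f on D, so every value of f sampled on D is a
   value of g, and every value of g is a value of f.  The envelopes of g are
   thus squeezed between those of f over D and over Omega. *)

Section Envelopes.
Context {R : realType} {n : nat} {Om : set 'rV[R]_n}.

Lemma dense_in_refl : dense_in Om Om.
Proof. by split=> // x Ox d d0; exists x; rewrite subrr normr0. Qed.

Lemma vals_sub (D1 D2 : set 'rV[R]_n) (f g : 'rV[R]_n -> ivl R) x d :
  D1 `<=` D2 ->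
  (forall y, Om y -> D1 y -> forall z, mem_ivl z (f y) -> mem_ivl z (g y)) ->
  vals D1 Om f x d `<=` vals D2 Om g x d.
Proof.
move=> D12 fg z [y [[[Oy xy] D1y] fyz]].
by exists y; split; [split; [split|apply: D12] | apply: fg].
Qed.

Lemma Iop_le (D1 D2 : set 'rV[R]_n) (f1 f2 : 'rV[R]_n -> ivl R) x :
  (forall d, vals D1 Om f1 x d `<=` vals D2 Om f2 x d) ->
  (Iop D2 Om f2 x <= Iop D1 Om f1 x)%E.
Proof.
move=> sub; apply: ge_ereal_sup => _ [d d0 <-].
apply: le_trans (ereal_inf_le_tmp (sub d)) _.
by apply: ereal_sup_ubound; exists d.
Qed.

Lemma Sop_le (D1 D2 : set 'rV[R]_n) (f1 f2 : 'rV[R]_n -> ivl R) x :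
  (forall d, vals D1 Om f1 x d `<=` vals D2 Om f2 x d) ->
  (Sop D1 Om f1 x <= Sop D2 Om f2 x)%E.
Proof.
move=> sub; apply: le_ereal_inf_tmp => _ [d d0 <-].
apply: le_trans _ (ereal_sup_le (sub d)).
by apply: ereal_inf_lbound; exists d.
Qed.

Lemma Fop_sandwich (D1 D2 D3 : set 'rV[R]_n) (f1 f2 f3 : 'rV[R]_n -> ivl R) x :
  Fop D1 Om f1 x = Fop D3 Om f3 x ->
  (forall d, vals D1 Om f1 x d `<=` vals D2 Om f2 x d) ->
  (forall d, vals D2 Om f2 x d `<=` vals D3 Om f3 x d) ->
  Fop D2 Om f2 x = Fop D1 Om f1 x.
Proof.
move=> [I13 S13] sub12 sub23; rewrite /Fop; congr pair; apply/le_anti/andP.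
- by split; [apply: Iop_le | rewrite I13; apply: Iop_le].
- by split; [rewrite S13; apply: Sop_le | apply: Sop_le].
Qed.

End Envelopes.

Lemma width_eq0 (R : realType) (a : ivl R) : width a = 0%E -> a.1 = a.2.
Proof.
case: a => [[l| |] [h| |]] //=; try by case.
by case=> /eqP; rewrite subr_eq0 => /eqP ->.
Qed.

Lemma sub_point_ivl (R : realType) (a b : ivl R) :
  a.1 = a.2 -> (b.1 <= b.2)%E ->
  (forall z, mem_ivl z b -> mem_ivl z a) ->
  forall z, mem_ivl z a -> mem_ivl z b.
Proof.
move=> a12 b12 ba z [a1z za2].
have [a1b1 b1a2] := ba _ (conj (lexx _) b12).
have [a1b2 b2a2] := ba _ (conj b12 (lexx _)).
have b1E : b.1 = a.1 by apply/le_anti; rewrite a1b1 a12 b1a2.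
have b2E : b.2 = a.1 by apply/le_anti; rewrite a1b2 a12 b2a2.
have zE : z = a.1 by apply/le_anti; rewrite a1z a12 za2.
by rewrite /mem_ivl b1E b2E zE lexx.
Qed.

Theorem theorem4 (R : realType) (n : nat) (Om : set 'rV[R]_n)
  (f : 'rV[R]_n -> \bar R * \bar R) :
  open Om -> in_A Om f -> D_continuous Om f ->
  (exists D : set 'rV[R]_n, dense_in D Om /\ forall x, D x -> width (f x) = 0%E) ->
  H_continuous Om f.
Proof.
move=> _ _ fDc [D [Ddense fD0]] g gA gf x Ox.
have [DOm _] := Ddense.
have fDE : Fop D Om f x = f x := fDc D Ddense x Ox.
have fOmE : Fop Om Om f x = f x := fDc Om dense_in_refl x Ox.
rewrite -fDE; apply: Fop_sandwich (etrans fDE (esym fOmE)) _ _ => d.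
- apply: vals_sub => // y Oy Dy.
  apply: sub_point_ivl; [exact/width_eq0/fD0 | exact: gA Oy | exact: gf Oy].
- by apply: vals_sub => // y Oy _; exact: gf.
Qed.
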